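(* Let $f\in R(A_2)$, $g\in R(A_1^* )$, $k\in K_2$, let $x\in D_2=D(A_2)\cap D(A_1^* )$ be the unique solution of $A_2x=f$, $A_1^*x=g$, $\pi_2x=k$, let $\tilde x\in H_2$, and set $e:=x-\tilde x$, $e_{A_1}:=\pi_{A_1}e$, $e_{A_2^*}:=\pi_{A_2^*}e$, $e_{K_2}:=\pi_2e$. Then: (i) $e=e_{A_1}+e_{K_2}+e_{A_2^*}\in R(A_1)\oplus K_2\oplus R(A_2^* )$ and $\|e\|^2_{H_2}=\|e_{A_1}\|^2_{H_2}+\|e_{K_2}\|^2_{H_2}+\|e_{A_2^*}\|^2_{H_2}$; (ii) $\|e_{A_1}\|^2_{H_2}=\max_{\varphi\in D(A_1)}\big(2\langle g,\varphi\rangle_{H_1}-\langle2\tilde x+A_1\varphi,A_1\varphi\rangle_{H_2}\big)$, the maximum being attained e.g. at $\hat\varphi:=(\mathcal{A}_1)^{-1}e_{A_1}\in D(\mathcal{A}_1)$; (iii) $\|e_{A_2^*}\|^2_{H_2}=\max_{\phi\in D(A_2^* )}\big(2\langle f,\phi\rangle_{H_3}-\langle2\tilde x+A_2^*\phi,A_2^*\phi\rangle_{H_2}\big)$, the maximum being attained e.g. at $\hat\phi:=(\mathcal{A}_2^* )^{-1}e_{A_2^*}\in D(\mathcal{A}_2^* )$; (iv) $\|e_{K_2}\|^2_{H_2}=\max_{\theta\in K_2}\langle2(k-\tilde x)-\theta,\theta\rangle_{H_2}$, the maximum being attained at $\hat\theta:=e_{K_2}$. If $\tilde x=k+\tilde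 x_\perp$ with some $\tilde x_\perp\in K_2^\perp$, then $e_{K_2}=0$, and in (ii) and (iii) $\tilde x$ can be replaced by $\tilde x_\perp$.
   Context: Let $H_0,\dots,H_4$ be Hilbert spaces and, for $\ell=0,\dots,3$, $A_\ell:D(A_\ell)\subset H_\ell\to H_{\ell+1}$ densely defined closed linear operators with Hilbert space adjoints $A_\ell^*$, satisfying $R(A_\ell)\subset N(A_{\ell+1})$ for $\ell=0,1,2$. Standing assumption: $R(A_1)$ and $R(A_2)$ are closed and $K_2$ is finite dimensional. $K_2:=N(A_2)\cap N(A_1^* )$, $\pi_2:H_2\to K_2$ orthogonal projector; $\pi_{A_1}$, $\pi_{A_2^*}$ orthogonal projectors of $H_2$ onto $R(A_1)$, $R(A_2^* )$. Reduced operators $\mathcal{A}_1:=A_1|_{D(A_1)\cap R(A_1^* )}$ and $\mathcal{A}_2^*:=A_2^*|_{D(A_2^* )\cap R(A_2)}$ (injective, with ranges $R(A_1)$ and $R(A_2^* )$). *)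

From HB Require Import structures.
From mathcomp Require Import all_boot all_order all_algebra.
From mathcomp Require Import all_classical all_reals all_analysis.
Set Implicit Arguments. Unset Strict Implicit. Unset Printing Implicit Defensive.
Import Order.TTheory GRing.Theory Num.Theory.
Local Open Scope classical_set_scope.
Local Open Scope ring_scope.

Section Defs.
Variable R : realType.

(* ip is a (real) inner product inducing the norm of V; together with
   completeness of V this makes V a real Hilbert space. *)
Definition is_inner_product (V : normedModType R) (ip : V -> V -> R) : Prop :=
  [/\ (forall x y, ip x y = ip y x),
      (forall (a : R) x y z, ip (a *: x + y) z = a * ip x z + ip y z)
    & (forall x, `|x| ^+ 2 = ip x x)].

Definition is_subspace (V : lmodType R) (D : set V) : Prop :=
  D 0 /\ forall (a : R) x y, D x -> D y -> D (a *: x + y).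

(* A : D(A) ⊂ V -> W is a densely defined closed linear operator;
   only the values of A on D are relevant. *)
Definition dd_closed_op (V W : normedModType R) (D : set V) (A : V -> W) : Prop :=
  [/\ is_subspace D,
      (forall (a : R) x y, D x -> D y -> A (a *: x + y) = a *: A x + A y),
      closure D = setT
    & closed [set p : V * W | D p.1 /\ p.2 = A p.1]].

Definition is_adjoint (V W : normedModType R) (ipV : V -> V -> R) (ipW : W -> W -> R)
  (D : set V) (A : V -> W) (Ds : set W) (As : W -> V) : Prop :=
  (forall y, Ds y <-> exists z, forall x, D x -> ipW (A x) y = ipV x z) /\
  (forall y, Ds y -> forall x, D x -> ipW (A x) y = ipV x (As y)).

Definition ran (V W : Type) (D : set V) (A : V -> W) : set W := A @` D.
Definition ker (V : Type) (W : lmodType R) (D : set V) (A : V -> W) : set V :=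
  [set x | D x /\ A x = 0].

Definition complex_prop (U V W : lmodType R) (D : set U) (A : U -> V)
  (D' : set V) (A' : V -> W) : Prop := ran D A `<=` ker D' A'.

Definition finite_dim (V : lmodType R) (S : set V) : Prop :=
  exists (n : nat) (b : 'I_n -> V),
    forall x, S x -> exists c : 'I_n -> R, x = \sum_(i < n) c i *: b i.

Definition orth_compl (V : lmodType R) (ip : V -> V -> R) (S : set V) : set V :=
  [set y | forall z, S z -> ip y z = 0].

Definition is_orth_proj (V : lmodType R) (ip : V -> V -> R) (S : set V) (P : V -> V) : Prop :=
  forall x, S (P x) /\ (forall y, S y -> ip (x - P x) y = 0).

End Defs.

From HB Require Import structures.
From mathcomp Require Import all_boot all_order all_algebra.
From mathcomp Require Import all_classical all_reals all_analysis.
From mathcomp Require Import ring lra.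
Import Order.TTheory GRing.Theory Num.Theory.
Local Open Scope classical_set_scope.
Local Open Scope ring_scope.
Set Implicit Arguments. Unset Strict Implicit. Unset Printing Implicit Defensive.

(* Part (i) is the orthogonal decomposition H2 = R(A_1) + K_2 + R(A_2^* ): the
   three spaces are pairwise orthogonal because the sequence is a complex, and a
   vector orthogonal to all of them lies in the kernels of A_1^* and A_2, that is
   in K_2, hence vanishes.  In (ii)-(iv) the functional to maximise equals
   |c|^2 - |c - v|^2, where c is the relevant component of e and v is A_1 phi,
   A_2^* phi or theta; so the maximum is |c|^2, attained where v = c.  For (ii)
   this needs some phi in D(A_1) with A_1 phi = c and phi in R(A_1^* ): take
   phi = A_1^* chi for a minimiser chi of |A_1^* z|^2 - 2 <z, c> over
   D(A_1^* ) /\ R(A_1).  The minimiser exists by the direct method, the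
   functional being coercive by the Friedrichs inequality |z| <= M |A_1^* z|,
   which Banach-Steinhaus derives from the closedness of R(A_1).  The same
   minimisation in the graph norm shows A^** = A, which makes (iii) the dual of
   (ii). *)

Section RealEps.
Variable R : realType.

Lemma le0_of_le_eps (a K : R) : 0 <= K -> (forall e, 0 < e -> a <= K * e) -> a <= 0.
Proof.
move=> K0 h; apply/ler_addgt0Pr => e e0; rewrite add0r.
have K1 : 0 < K + 1 by lra.
apply: (le_trans (h (e / (K + 1)) _)); first by rewrite divr_gt0.
rewrite mulrA ler_pdivrMr //; nra.
Qed.

Lemma eq0_of_norm_le_eps (c K : R) : 0 <= K -> (forall e, 0 < e -> `|c| <= K * e) -> c = 0.
Proof.
move=> K0 /(le0_of_le_eps K0) c0; apply/eqP.
by rewrite -normr_eq0 eq_le c0 normr_ge0.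
Qed.

Lemma quadratic_ge0_lin_eq0 (b c : R) :
  0 <= c -> (forall t, 0 <= 2 * t * b + t ^+ 2 * c) -> b = 0.
Proof.
move=> c0 h; have c1 : 0 < c + 1 by lra.
have := h (- b / (c + 1)).
have -> : 2 * (- b / (c + 1)) * b + (- b / (c + 1)) ^+ 2 * c =
          - (b ^+ 2 * (c + 2)) / (c + 1) ^+ 2 by field; lra.
rewrite pmulr_lge0 ?invr_gt0 ?exprn_gt0 // => hb.
apply/eqP; rewrite -sqrf_eq0 eq_le sqr_ge0 andbT; nra.
Qed.

End RealEps.

Lemma sqr_norm_defect_max (R : realType) (V : normedModType R) (T : Type) (S S' : set T)
    (F : T -> R) (a : T -> V) (c : V) :
  (forall t, S t -> F t = `|c| ^+ 2 - `|c - a t| ^+ 2) -> S' `<=` S ->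
  (exists2 t, S' t & a t = c) ->
  (forall t, S t -> F t <= `|c| ^+ 2) /\ exists t, S' t /\ a t = c /\ F t = `|c| ^+ 2.
Proof.
move=> hF sS [t S't atc]; split=> [u Su|].
  by rewrite hF // lerBlDr lerDl sqr_ge0.
exists t; do 2!split=> //.
by rewrite hF ?atc ?subrr ?normr0 ?expr0n ?subr0 //; exact: sS.
Qed.

Lemma sqr_normr_le0 (R : realType) (V : normedModType R) (x : V) :
  `|x| ^+ 2 <= 0 -> x = 0.
Proof. by rewrite le_eqVlt ltNge sqr_ge0 orbF sqrf_eq0 normr_eq0 => /eqP. Qed.

Section InnerProduct.
Variables (R : realType) (V : normedModType R) (ip : V -> V -> R).
Hypothesis hip : is_inner_product ip.

Lemma ipC x y : ip x y = ip y x. Proof. by case: hip. Qed.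
Lemma ipxx x : ip x x = `|x| ^+ 2. Proof. by case: hip. Qed.
Lemma ipZDl a x y z : ip (a *: x + y) z = a * ip x z + ip y z. Proof. by case: hip. Qed.

Lemma ip0l z : ip 0 z = 0.
Proof.
have := ipZDl 1 0 0 z; rewrite scale1r addr0 mul1r => h.
by apply: (@addrI _ (ip 0 z)); rewrite addr0 -h.
Qed.

Lemma ipDl x y z : ip (x + y) z = ip x z + ip y z.
Proof. by rewrite -(scale1r x) ipZDl mul1r scale1r. Qed.
Lemma ipZl a x z : ip (a *: x) z = a * ip x z.
Proof. by rewrite -(addr0 (a *: x)) ipZDl ip0l addr0. Qed.
Lemma ipNl x z : ip (- x) z = - ip x z.
Proof. by rewrite -scaleN1r ipZl mulN1r. Qed.
Lemma ipBl x y z : ip (x - y) z = ip x z - ip y z.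
Proof. by rewrite ipDl ipNl. Qed.
Lemma ip0r z : ip z 0 = 0. Proof. by rewrite ipC ip0l. Qed.
Lemma ipDr x y z : ip z (x + y) = ip z x + ip z y.
Proof. by rewrite ipC ipDl !(ipC z). Qed.
Lemma ipZr a x z : ip z (a *: x) = a * ip z x.
Proof. by rewrite ipC ipZl ipC. Qed.
Lemma ipNr x z : ip z (- x) = - ip z x.
Proof. by rewrite ipC ipNl ipC. Qed.
Lemma ipBr x y z : ip z (x - y) = ip z x - ip z y.
Proof. by rewrite ipDr ipNr. Qed.

Lemma sqr_normZD s t x y : `|s *: x + t *: y| ^+ 2 =
  s ^+ 2 * `|x| ^+ 2 + 2 * s * t * ip x y + t ^+ 2 * `|y| ^+ 2.
Proof. by rewrite -!ipxx ipDl !ipDr !ipZl !ipZr (ipC y x); ring. Qed.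

Lemma sqr_normDZ t x y :
  `|x + t *: y| ^+ 2 = `|x| ^+ 2 + 2 * t * ip x y + t ^+ 2 * `|y| ^+ 2.
Proof. by rewrite -{1}(scale1r x) sqr_normZD; ring. Qed.

Lemma sqr_normD x y : `|x + y| ^+ 2 = `|x| ^+ 2 + 2 * ip x y + `|y| ^+ 2.
Proof. by rewrite -{1}(scale1r y) sqr_normDZ; ring. Qed.

Lemma sqr_normB x y : `|x - y| ^+ 2 = `|x| ^+ 2 - 2 * ip x y + `|y| ^+ 2.
Proof. by rewrite sqr_normD ipNr normrN; ring. Qed.

Lemma ip_le_norm x y : ip x y <= `|x| * `|y|.
Proof.
have [->|x0] := eqVneq x 0; first by rewrite ip0l normr0 mul0r.
have [->|y0] := eqVneq y 0; first by rewrite ip0r normr0 mulr0.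
have := sqr_ge0 `|(`|y| *: x + (- `|x|) *: y)|; rewrite sqr_normZD.
have px : 0 < `|x| by rewrite normr_gt0.
have py : 0 < `|y| by rewrite normr_gt0.
have pxy : 0 < `|x| * `|y| by rewrite mulr_gt0.
nra.
Qed.

Lemma normr_ip_le x y : `|ip x y| <= `|x| * `|y|.
Proof. by rewrite ler_norml ip_le_norm andbT -(normrN y) lerNl -ipNr ip_le_norm. Qed.

Lemma ipxx_eq0 x : ip x x = 0 -> x = 0.
Proof. by rewrite ipxx => h; apply: sqr_normr_le0; rewrite h. Qed.

Lemma orth_proj_ip (S : set V) P x y : is_orth_proj ip S P -> S y -> ip x y = ip (P x) y.
Proof. by move=> /(_ x) [_ /(_ y)] h /h /eqP; rewrite ipBl subr_eq0 => /eqP. Qed.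

Lemma orth_proj_closed (S : set V) P x : is_orth_proj ip S P ->
  (forall e, 0 < e -> exists2 y, S y & `|x - y| < e) -> S x.
Proof.
move=> hP hx; have [SP orth] := hP x.
set d := x - P x in orth *.
have dE y : S y -> `|d| ^+ 2 = ip d (x - y).
  by move=> Sy; rewrite -ipxx {2}/d !ipBr (orth _ Sy) (orth _ SP).
have d_le0 : `|d| ^+ 2 <= 0.
  apply: (le0_of_le_eps (normr_ge0 d)) => e e0.
  have [y Sy hy] := hx e e0.
  rewrite (dE y Sy); apply: le_trans (ip_le_norm _ _) _.
  by rewrite ler_wpM2l // ltW.
suff /eqP : d = 0 by rewrite subr_eq0 => /eqP ->.
exact: sqr_normr_le0.
Qed.

Lemma dense_orth_eq0 (D : set V) w : closure D = setT ->
  (forall phi, D phi -> ip phi w = 0) -> w = 0.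
Proof.
move=> cD h.
have w_le0 : `|w| ^+ 2 <= 0.
  apply: (le0_of_le_eps (normr_ge0 w)) => e e0.
  have [phi [Dphi]] : D `&` ball w e !=set0.
    by apply: (_ : closure D w); [rewrite cD | exact: nbhsx_ballx].
  rewrite -ball_normE /= => hphi.
  rewrite (_ : `|w| ^+ 2 = ip (w - phi) w); last by rewrite ipBl (h _ Dphi) subr0 ipxx.
  by apply: le_trans (ip_le_norm _ _) _; rewrite mulrC ler_wpM2l // ltW.
exact: sqr_normr_le0.
Qed.

Lemma sqr_norm_defectE x y c a : ip (x - y - c) a = 0 ->
  2 * ip a x - ip (2 *: y + a) a = `|c| ^+ 2 - `|c - a| ^+ 2.
Proof.
rewrite !ipBl => h.
by rewrite sqr_normB ipDl ipZl ipxx (ipC a x); lra.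
Qed.

Lemma orth_complD (S : set V) u v :
  orth_compl ip S u -> orth_compl ip S v -> orth_compl ip S (u + v).
Proof. by move=> hu hv z Sz; rewrite ipDl hu ?hv ?addr0. Qed.

Lemma orth_proj_orth_eq0 (S : set V) P x :
  is_orth_proj ip S P -> orth_compl ip S x -> P x = 0.
Proof.
move=> hP hx; have [SPx _] := hP x.
by apply: ipxx_eq0; rewrite -(orth_proj_ip x hP SPx) hx.
Qed.

Lemma orth_proj_sum3 (S1 S2 S3 : set V) P1 P2 P3 x :
  is_orth_proj ip S1 P1 -> is_orth_proj ip S2 P2 -> is_orth_proj ip S3 P3 ->
  S2 `<=` orth_compl ip S1 -> S3 `<=` orth_compl ip S1 -> S3 `<=` orth_compl ip S2 ->
  orth_compl ip S1 `&` orth_compl ip S2 `&` orth_compl ip S3 `<=` [set 0] ->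
  x = P1 x + P2 x + P3 x.
Proof.
move=> h1 h2 h3 o12 o13 o23 htot.
have [S1x _] := h1 x; have [S2x _] := h2 x; have [S3x _] := h3 x.
apply/eqP; rewrite -subr_eq0; apply/eqP; apply: htot; split; [split|] => y Sy;
  rewrite ipBl !ipDl.
- by rewrite (orth_proj_ip x h1 Sy) (o12 _ S2x _ Sy) (o13 _ S3x _ Sy); ring.
- rewrite (orth_proj_ip x h2 Sy) (ipC (P1 x)) (o12 _ Sy _ S1x) (o23 _ S3x _ Sy).
  by ring.
- rewrite (orth_proj_ip x h3 Sy) (ipC (P1 x)) (o13 _ Sy _ S1x).
  by rewrite (ipC (P2 x)) (o23 _ Sy _ S2x); ring.
Qed.

Lemma sqr_norm_sum3 a b c : ip a b = 0 -> ip a c = 0 -> ip b c = 0 ->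
  `|a + b + c| ^+ 2 = `|a| ^+ 2 + `|b| ^+ 2 + `|c| ^+ 2.
Proof.
by move=> hab hac hbc; rewrite !sqr_normD ipDl hab hac hbc; ring.
Qed.

Lemma orth_proj_quadratic_max (S : set V) P x y : is_orth_proj ip S P ->
  (forall t, S t -> ip (2 *: (P x - y) - t) t <= `|P (x - y)| ^+ 2) /\
  ip (2 *: (P x - y) - P (x - y)) (P (x - y)) = `|P (x - y)| ^+ 2.
Proof.
move=> hP; have [] := @sqr_norm_defect_max _ _ _ S S (fun t => ip (2 *: (P x - y) - t) t)
  id (P (x - y)).
- move=> t St; have e1 := orth_proj_ip x hP St.
  have := orth_proj_ip (x - y) hP St; rewrite ipBl => e2.
  by rewrite sqr_normB !ipBl ipZl ipBl ipxx; lra.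
- by [].
- by exists (P (x - y)); first exact: (hP _).1.
by move=> hle [t [_ [/= tE ht]]]; split; last by rewrite tE in ht.
Qed.

End InnerProduct.

Section LinearOn.
Variables (R : realType) (V W : lmodType R).

Definition linear_on (D : set V) (A : V -> W) : Prop :=
  forall (a : R) x y, D x -> D y -> A (a *: x + y) = a *: A x + A y.

Variables (D : set V) (A : V -> W).
Hypotheses (hD : is_subspace D) (hA : linear_on D A).

Lemma subspace0 : D 0. Proof. by case: hD. Qed.

Lemma subspaceZ a x : D x -> D (a *: x).
Proof. by move=> Dx; case: hD => D0 hZ; rewrite -[_ *: x]addr0; apply: hZ. Qed.

Lemma subspaceB x y : D x -> D y -> D (x - y).
Proof. by move=> Dx Dy; case: hD => _ hZ; rewrite addrC -scaleN1r; apply: hZ. Qed.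

Lemma linear_on0 : A 0 = 0.
Proof.
have := hA 1 subspace0 subspace0; rewrite !scale1r addr0 => h.
by apply: (@addrI _ (A 0)); rewrite addr0 -h.
Qed.

Lemma linear_onZ a x : D x -> A (a *: x) = a *: A x.
Proof. by move=> Dx; rewrite -[_ *: x]addr0 hA ?linear_on0 ?addr0 //; exact: subspace0. Qed.

Lemma linear_onB x y : D x -> D y -> A (x - y) = A x - A y.
Proof. by move=> Dx Dy; rewrite addrC -scaleN1r hA // scaleN1r addrC. Qed.

End LinearOn.

Section GraphClosed.
Variables (R : realType) (X Y : normedModType R).

Definition graph_closed (D : set X) (A : X -> Y) : Prop :=
  forall x w, (forall e, 0 < e -> exists2 y, D y & `|x - y| < e /\ `|w - A y| < e) ->
    D x /\ A x = w.

Lemma dd_closed_op_graph_closed (D : set X) (A : X -> Y) :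
  dd_closed_op D A -> graph_closed D A.
Proof.
case=> _ _ _ cG x w h.
have : closure [set p : X * Y | D p.1 /\ p.2 = A p.1] (x, w).
  move=> B /nbhs_ballP [e /= e0 hB].
  have [y Dy [h1 h2]] := h e e0.
  by exists (y, A y); split => //; apply: hB; split; rewrite -ball_normE.
by move/closure_id: cG => <- -[/= ? ->].
Qed.

End GraphClosed.

(* [graph_adjoint D A Ds As] characterises the graph of the adjoint exactly,
   which for densely defined A is [is_adjoint] (see [is_adjoint_graph]);
   [graph_adjoint Ds As D A], with the inner products swapped, says A** = A. *)
Section GraphAdjoint.
Variables (R : realType) (X Y : normedModType R) (ipX : X -> X -> R) (ipY : Y -> Y -> R).

Definition graph_adjoint (D : set X) (A : X -> Y) (Ds : set Y) (As : Y -> X) : Prop :=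
  forall y z, Ds y /\ As y = z <-> forall phi, D phi -> ipY (A phi) y = ipX phi z.

Hypotheses (hX : is_inner_product ipX) (hY : is_inner_product ipY).
Variables (D : set X) (A : X -> Y) (Ds : set Y) (As : Y -> X).

Lemma is_adjoint_graph : dd_closed_op D A -> is_adjoint ipX ipY D A Ds As ->
  graph_adjoint D A Ds As.
Proof.
case=> _ _ cD _ [hDs hAs] y z; split=> [[Dy <-] phi Dphi|h]; first exact: hAs.
have Dy : Ds y by apply/hDs; exists z.
split=> //; apply/eqP; rewrite -subr_eq0; apply/eqP.
apply: (dense_orth_eq0 hX cD) => phi Dphi.
by rewrite (ipBr hX) -(hAs _ Dy _ Dphi) (h _ Dphi) subrr.
Qed.

Hypothesis hadj : graph_adjoint D A Ds As.

Lemma graph_adjointE y phi : Ds y -> D phi -> ipY (A phi) y = ipX phi (As y).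
Proof. by move=> Dy; apply: (proj1 (hadj y (As y))). Qed.

Lemma graph_adjoint_ker y : (forall phi, D phi -> ipY (A phi) y = 0) -> Ds y /\ As y = 0.
Proof. by move=> h; apply/hadj => phi Dphi; rewrite h // (ip0r hX). Qed.

Lemma graph_adjoint_comb a y1 y2 : Ds y1 -> Ds y2 ->
  Ds (a *: y1 + y2) /\ As (a *: y1 + y2) = a *: As y1 + As y2.
Proof.
move=> Dy1 Dy2; apply/hadj => phi Dphi.
by rewrite (ipDr hY) (ipZr hY) (ipDr hX) (ipZr hX) !graph_adjointE.
Qed.

Lemma graph_adjoint_subspace : is_subspace Ds.
Proof.
split=> [|a y1 y2 Dy1 Dy2]; last exact: (graph_adjoint_comb a Dy1 Dy2).1.
by have [] := @graph_adjoint_ker 0 (fun phi _ => ip0r hY (A phi)).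
Qed.

Lemma graph_adjoint_linear : linear_on Ds As.
Proof. by move=> a y1 y2 Dy1 Dy2; exact: (graph_adjoint_comb a Dy1 Dy2).2. Qed.

Lemma graph_adjoint_graph_closed : graph_closed Ds As.
Proof.
move=> x w h; apply/hadj => phi Dphi; apply/eqP; rewrite -subr_eq0; apply/eqP.
apply: (@eq0_of_norm_le_eps _ _ (`|A phi| + `|phi|)); first by rewrite addr_ge0.
move=> e e0; have [y Dy [h1 h2]] := h e e0.
have -> : ipY (A phi) x - ipX phi w = ipY (A phi) (x - y) - ipX phi (w - As y).
  by rewrite (ipBr hY) (ipBr hX) (graph_adjointE Dy Dphi); ring.
apply: (le_trans (ler_normB _ _)); rewrite mulrDl.
by apply: lerD; (apply: le_trans; first exact: normr_ip_le);
  apply: ler_wpM2l => //; exact: ltW.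
Qed.

End GraphAdjoint.

Lemma cvg_of_sqr_dist_le (R : realType) (Z : completeNormedModType R) (v : nat -> Z) (K : R) :
  0 <= K -> (forall n k, `|v n - v k| ^+ 2 <= K * (n.+1%:R^-1 + k.+1%:R^-1)) ->
  exists l : Z, v n @[n --> \oo] --> l.
Proof.
move=> K0 hv.
suff /cauchy_exP/cauchy_cvg/cvg_ex[l hl] : cauchy_ex (v @ \oo) by exists l.
move=> e e0; rewrite /fmapE -ball_normE /ball_.
pose N := Num.truncn (2 * K / e ^+ 2).
have e2 : 0 < e ^+ 2 by rewrite exprn_gt0.
have hN : 2 * K < N.+1%:R * e ^+ 2 by rewrite -ltr_pdivrMr // truncnS_gt.
exists (v N), N => // n /= nN.
have hn : n.+1%:R^-1 <= N.+1%:R^-1 :> R by rewrite lef_pV2 ?posrE // ler_nat ltnS.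
suff : `|v N - v n| ^+ 2 < e ^+ 2 by have := normr_ge0 (v N - v n); nra.
apply: (le_lt_trans (hv N n)); apply: (@le_lt_trans _ _ (K * (2 * N.+1%:R^-1))).
  by apply: ler_wpM2l => //; rewrite mulr_natl mulr2n lerD2l.
by rewrite mulrA ltr_pdivrMr // mulrC (mulrC (e ^+ 2)).
Qed.

Section Minimisation.
Variables (R : realType) (X Y : completeNormedModType R).
Variables (ipX : X -> X -> R) (ipY : Y -> Y -> R).
Hypotheses (hX : is_inner_product ipX) (hY : is_inner_product ipY).
Variables (C : set X) (T : X -> Y) (alpha M : R) (p : X) (q : Y).
Hypotheses (hC : is_subspace C) (hT : linear_on C T) (hcl : graph_closed C T).
Hypotheses (ha : 0 <= alpha) (hM : 0 < M)
  (hcoer : forall x, C x -> `|x| ^+ 2 <= M * (alpha * `|x| ^+ 2 + `|T x| ^+ 2)).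

Let N x := alpha * `|x| ^+ 2 + `|T x| ^+ 2.
Let J x := N x - 2 * ipX x p - 2 * ipY (T x) q.
Let beta x h := alpha * ipX x h + ipY (T x) (T h) - ipX h p - ipY (T h) q.

Let N_ge0 x : 0 <= N x.
Proof. by rewrite addr_ge0 // mulr_ge0. Qed.

Lemma energy_midpoint a b : C a -> C b ->
  J a + J b = 2 * J (2^-1 *: a + 2^-1 *: b) + N (a - b) / 2.
Proof.
move=> Ca Cb; have Cb' := subspaceZ hC 2^-1 Cb.
rewrite /J /N hT // (linear_onZ hC hT) // (linear_onB hT) //.
rewrite !(sqr_normZD hX) !(sqr_normZD hY) (sqr_normB hX) (sqr_normB hY).
by rewrite !(ipDl hX) !(ipZl hX) !(ipDl hY) !(ipZl hY); field.
Qed.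

Lemma energy_shift x h t : C x -> C h ->
  J (x + t *: h) = J x + 2 * t * beta x h + t ^+ 2 * N h.
Proof.
move=> Cx Ch; rewrite /J /N /beta.
have -> : T (x + t *: h) = T x + t *: T h by rewrite addrC hT // addrC.
rewrite (sqr_normDZ hX) (sqr_normDZ hY) !(ipDl hX) !(ipZl hX) !(ipDl hY) !(ipZl hY).
ring.
Qed.

Lemma energy_lower_bound x : C x -> - (2 * M * `|p| ^+ 2 + 2 * `|q| ^+ 2) <= J x.
Proof.
move=> Cx; have h1 := ip_le_norm hX x p; have h2 := ip_le_norm hY (T x) q.
have h3 := hcoer Cx.
have a0 := normr_ge0 x; have b0 := normr_ge0 p.
have c0 := normr_ge0 (T x); have d0 := normr_ge0 q.
have e1 : 2 * `|x| * `|p| <= N x / 2 + 2 * M * `|p| ^+ 2.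
  rewrite -(@ler_pM2l _ (2 * M)); last by rewrite mulr_gt0.
  have := sqr_ge0 (`|x| - 2 * M * `|p|).
  rewrite /N in h3 *; nra.
have e2 : 2 * `|T x| * `|q| <= N x / 2 + 2 * `|q| ^+ 2.
  have : `|T x| ^+ 2 <= N x by rewrite /N lerDr mulr_ge0 // sqr_ge0.
  have := sqr_ge0 (`|T x| - 2 * `|q|).
  nra.
rewrite /J; lra.
Qed.

Lemma minimizing_seq : exists m (u : nat -> X),
  (forall x, C x -> m <= J x) /\ forall n, C (u n) /\ J (u n) < m + n.+1%:R^-1.
Proof.
pose E := J @` C.
have lbE : has_lbound E.
  by exists (- (2 * M * `|p| ^+ 2 + 2 * `|q| ^+ 2)) => _ [x Cx <-]; exact: energy_lower_bound.
have infE : has_inf E by split => //; exists (J 0), 0; first exact: subspace0.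
have /choice [u hu] : forall n : nat, exists x, C x /\ J x < inf E + n.+1%:R^-1.
  move=> n; have [_ [x Cx <-] hx] := @inf_adherent _ E (n.+1%:R^-1) ltac:(by []) infE.
  by exists x.
exists (inf E), u; split => // x Cx.
by apply: ge_inf => //; exists x.
Qed.

Lemma beta_dist x y h :
  `|beta x h - beta y h| <= alpha * `|x - y| * `|h| + `|T x - T y| * `|T h|.
Proof.
have -> : beta x h - beta y h = alpha * ipX (x - y) h + ipY (T x - T y) (T h).
  by rewrite /beta (ipBl hX) (ipBl hY); ring.
apply: (le_trans (ler_normD _ _)); rewrite normrM (ger0_norm ha) -mulrA.
by apply: lerD; [apply: ler_wpM2l => //|]; exact: normr_ip_le.
Qed.

Section MinimizingSequence.
Variables (m : R) (u : nat -> X).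
Hypotheses (hm : forall x, C x -> m <= J x)
  (hu : forall n, C (u n) /\ J (u n) < m + n.+1%:R^-1).

Lemma minimizing_seq_gap n k : N (u n - u k) <= 2 * (n.+1%:R^-1 + k.+1%:R^-1).
Proof.
have [Cn Jn] := hu n; have [Ck Jk] := hu k.
have := energy_midpoint Cn Ck.
have := hm (hC.2 2^-1 _ _ Cn (subspaceZ hC 2^-1 Ck)).
move: (n.+1%:R^-1) (k.+1%:R^-1) Jn Jk => a b; lra.
Qed.

Lemma minimizing_seq_limit : exists2 xs, C xs & forall e, 0 < e ->
  exists n, n.+1%:R^-1 < e /\ `|xs - u n| < e /\ `|T xs - T (u n)| < e.
Proof.
have Cu n := (hu n).1.
have [xs hxs] : exists l : X, u n @[n --> \oo] --> l.
  apply: (@cvg_of_sqr_dist_le _ _ u (2 * M)); first by rewrite mulr_ge0 // ltW.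
  move=> n k; apply: (le_trans (hcoer (subspaceB hC (Cu n) (Cu k)))).
  rewrite -mulrA [X in _ <= X]mulrCA; apply: ler_wpM2l; [exact: ltW | exact: minimizing_seq_gap].
have [w hw] : exists l : Y, (T \o u) n @[n --> \oo] --> l.
  apply: (@cvg_of_sqr_dist_le _ _ (T \o u) 2) => // n k /=.
  rewrite -(linear_onB hT (Cu n) (Cu k)); apply: le_trans (minimizing_seq_gap n k).
  by rewrite lerDr mulr_ge0 // sqr_ge0.
have near_all e : 0 < e ->
    exists n, n.+1%:R^-1 < e /\ `|xs - u n| < e /\ `|w - T (u n)| < e.
  move=> e0; move/cvgrPdist_lt: hxs => /(_ e e0) H1.
  move/cvgrPdist_lt: hw => /(_ e e0) H2.
  have H3 := near_infty_natSinv_lt (PosNum e0).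
  by have [n /= [h3 [h1 h2]]] := filter_ex (filterI H3 (filterI H1 H2)); exists n.
have [Cxs Txs] : C xs /\ T xs = w.
  by apply: hcl => e e0; have [n [_ [h1 h2]]] := near_all e e0; exists (u n).
by exists xs => //; rewrite Txs.
Qed.

Lemma minimizing_seq_limit_stationary xs : C xs -> (forall e, 0 < e ->
    exists n, n.+1%:R^-1 < e /\ `|xs - u n| < e /\ `|T xs - T (u n)| < e) ->
  forall h, C h -> beta xs h = 0.
Proof.
move=> Cxs near_all h Ch; apply: (quadratic_ge0_lin_eq0 (N_ge0 h)) => t.
rewrite -oppr_le0; set K := alpha * `|h| + `|T h|.
have K0 : 0 <= K by rewrite addr_ge0 // mulr_ge0.
apply: (@le0_of_le_eps _ _ (1 + 2 * `|t| * K)); first by rewrite addr_ge0 // !mulr_ge0.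
move=> e e0; have [n [hn [h1 h2]]] := near_all e e0; have [Cn Jn] := hu n.
have Jt := hm (hC.2 t _ _ Ch Cn); rewrite addrC energy_shift // in Jt.
have db : 2 * t * (beta (u n) h - beta xs h) <= 2 * `|t| * (e * K).
  apply: le_trans (ler_norm _) _; rewrite !normrM normr_nat.
  apply: ler_wpM2l; first by rewrite mulr_ge0.
  rewrite distrC; apply: le_trans (beta_dist _ _ _) _; rewrite mulrDr.
  apply: lerD; last by apply: ler_wpM2r => //; exact: ltW.
  rewrite -mulrA [e * _]mulrCA; apply: ler_wpM2l => //.
  by apply: ler_wpM2r => //; exact: ltW.
set b := beta (u n) h in Jt db; set JJ := J (u n) in Jt Jn.
have -> : (1 + 2 * `|t| * K) * e = e + 2 * `|t| * (e * K) by ring.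
move: (n.+1%:R^-1) hn Jn => a; lra.
Qed.

End MinimizingSequence.

Lemma exists_variational_solution : exists2 x, C x &
  forall h, C h -> alpha * ipX x h + ipY (T x) (T h) = ipX h p + ipY (T h) q.
Proof.
have [m [u [hm hu]]] := minimizing_seq.
have [xs Cxs near_all] := minimizing_seq_limit hm hu.
exists xs => // h Ch.
by have := minimizing_seq_limit_stationary hm hu Cxs near_all Ch; rewrite /beta; lra.
Qed.

End Minimisation.

Section Friedrichs.
Variables (R : realType) (X : completeNormedModType R) (Y : normedModType R).
Variables (ipX : X -> X -> R) (ipY : Y -> Y -> R).
Hypotheses (hX : is_inner_product ipX) (hY : is_inner_product ipY).
Variables (C : set X) (T : X -> Y).
Hypotheses (hC : is_subspace C) (hT : linear_on C T)
  (hE : forall z, exists w, forall x, C x -> ipX z x = ipY (T x) w).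

Lemma ip_bounded_on_unit_graph : exists M, forall x z, C x -> `|T x| <= 1 -> `|z| <= 1 ->
  `|ipX z x| <= M.
Proof.
pose F := [set f : X -> R | exists2 x, C x & `|T x| <= 1 /\ f = ipX^~ x].
have hF f : F f -> bounded_fun_norm f /\ linear f.
  move=> [x _ [_ ->]]; split=> [r|a u v]; last by rewrite (ipZDl hX).
  exists (`|r| * `|x|) => z hz; apply: (le_trans (normr_ip_le hX _ _)).
  by apply: ler_wpM2r => //; exact: (le_trans hz (ler_norm r)).
have pb : pointwise_bounded F.
  move=> z; have [w hw] := hE z; exists `|w| => _ [x Cx [Tx ->]].
  rewrite hw //; apply: (le_trans (normr_ip_le hY _ _)).
  by rewrite -[X in _ <= X]mul1r ler_wpM2r.
have [M hM] := @Banach_Steinhauss R X R F hF pb 1.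
by exists M => x z Cx Tx z1; apply: (hM (ipX^~ x)) => //; exists x.
Qed.

Lemma friedrichs : exists2 M, 0 < M & forall x, C x -> `|x| <= M * `|T x|.
Proof.
have [M hM] := ip_bounded_on_unit_graph.
have M1 : 0 < `|M| + 1 by rewrite ltr_pwDr.
exists (`|M| + 1) => // x Cx.
have [Tx0|Tx0] := eqVneq (T x) 0.
  have [w hw] := hE x.
  have /(ipxx_eq0 hX) -> : ipX x x = 0 by rewrite hw // Tx0 (ip0l hY).
  by rewrite normr0 mulr_ge0 // ltW.
have [->|x0] := eqVneq x 0; first by rewrite normr0 mulr_ge0 // ltW.
have sp : 0 < `|T x| by rewrite normr_gt0.
have xp : 0 < `|x| by rewrite normr_gt0.
have Tx1 : `|T (`|T x|^-1 *: x)| <= 1.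
  by rewrite (linear_onZ hC hT) // normrZ normfV normr_id mulVf // gt_eqF.
have := hM _ (`|x|^-1 *: x) (subspaceZ hC _ Cx) Tx1.
rewrite normrZ normfV normr_id mulVf ?gt_eqF // lexx (ipZl hX) (ipZr hX) (ipxx hX).
have -> : `|x|^-1 * (`|T x|^-1 * `|x| ^+ 2) = `|x| / `|T x| by field; rewrite !gt_eqF.
rewrite ger0_norm ?divr_ge0 // ler_pdivrMr // => /(_ isT) h.
by apply: le_trans h _; rewrite ler_pM2r // (le_trans (ler_norm M)) // lerDl.
Qed.

End Friedrichs.

Section Biadjoint.
Variables (R : realType) (X Y : completeNormedModType R).
Variables (ipX : X -> X -> R) (ipY : Y -> Y -> R).
Hypotheses (hX : is_inner_product ipX) (hY : is_inner_product ipY).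
Variables (D : set X) (A : X -> Y) (Ds : set Y) (As : Y -> X).
Hypotheses (hA : dd_closed_op D A) (hAs : is_adjoint ipX ipY D A Ds As).

(* (xs, A xs) is the projection of (u, v) onto the graph of A; the hypothesis
   makes (u, v) orthogonal to the residual, which therefore vanishes. *)
Lemma dd_closed_op_biadjoint : graph_adjoint ipY ipX Ds As D A.
Proof.
have hadj := is_adjoint_graph hX hA hAs.
move=> u v; split=> [[Du <-] h Dh|hyp].
  by rewrite (ipC hX) -(graph_adjointE hadj) // (ipC hY).
case: (hA) => hD hlin _ _.
have hcoer x : D x -> `|x| ^+ 2 <= 1 * (1 * `|x| ^+ 2 + `|A x| ^+ 2).
  by rewrite !mul1r lerDl sqr_ge0.
have [xs Dxs hv] := exists_variational_solution hX hY u v hD hlin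
  (dd_closed_op_graph_closed hA) ler01 ltr01 hcoer.
have [Db Asb] : Ds (A xs - v) /\ As (A xs - v) = u - xs.
  apply/hadj => phi Dphi; have := hv phi Dphi.
  rewrite mul1r (ipBr hY) (ipBr hX) (ipC hY (A phi) (A xs)) (ipC hY (A phi) v).
  by rewrite (ipC hX phi u) (ipC hX phi xs); lra.
have e1 := hyp _ Db; rewrite Asb (ipBl hX) (ipBl hY) (ipxx hX) (ipxx hY) in e1.
have e2 := hv _ Dxs; rewrite mul1r !(ipxx hX) (ipxx hY) in e2.
have hsum : `|xs - u| ^+ 2 + `|A xs - v| ^+ 2 <= 0.
  by rewrite (sqr_normB hX) (sqr_normB hY); lra.
have xsu : xs - u = 0 by apply: sqr_normr_le0; have := sqr_ge0 `|A xs - v|; lra.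
have Axsv : A xs - v = 0 by apply: sqr_normr_le0; have := sqr_ge0 `|xs - u|; lra.
move/eqP: xsu; rewrite subr_eq0 => /eqP <-.
by move/eqP: Axsv; rewrite subr_eq0 => /eqP <-.
Qed.

End Biadjoint.

Section ReducedOperator.
Variables (R : realType) (X Y : completeNormedModType R).
Variables (ipX : X -> X -> R) (ipY : Y -> Y -> R).
Hypotheses (hX : is_inner_product ipX) (hY : is_inner_product ipY).
Variables (D : set X) (A : X -> Y) (Ds : set Y) (As : Y -> X).
Hypotheses (hadj : graph_adjoint ipX ipY D A Ds As)
  (hbiadj : graph_adjoint ipY ipX Ds As D A).
Variable P : Y -> Y.
Hypothesis hP : is_orth_proj ipY (ran D A) P.

Let C := Ds `&` ran D A.

Let C_subspace : is_subspace C.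
Proof.
have [Ds0 DsZD] := graph_adjoint_subspace hX hY hadj.
have [D0 DZD] := graph_adjoint_subspace hY hX hbiadj.
have hlin := graph_adjoint_linear hY hX hbiadj.
split=> [|a y1 y2 [Dy1 [x1 Dx1 Ax1]] [Dy2 [x2 Dx2 Ax2]]].
  by split=> //; exists 0; rewrite ?(linear_on0 (conj D0 DZD) hlin).
split; first exact: DsZD.
by exists (a *: x1 + x2); [exact: DZD | rewrite hlin // Ax1 Ax2].
Qed.

Let C_graph_closed : graph_closed C As.
Proof.
move=> x w h; have [Dx Axw] : Ds x /\ As x = w.
  by apply: (graph_adjoint_graph_closed hX hY hadj) => e /h [y [Dy _] hy]; exists y.
split=> //; split=> //; apply: (orth_proj_closed hY hP) => e /h [y [_ ry] [hy _]].
by exists y.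
Qed.

Lemma orth_proj_ran_adjoint h : Ds h -> C (P h) /\ As (P h) = As h.
Proof.
move=> Dh; have [rPh orth] := hP h.
have [Dh0 Ah0] : Ds (h - P h) /\ As (h - P h) = 0.
  by apply: (graph_adjoint_ker hX hadj) => phi Dphi; rewrite (ipC hY) orth //; exists phi.
have [DPh APh] := graph_adjoint_comb hX hY hadj (-1) Dh0 Dh.
rewrite scaleN1r opprB subrK in DPh APh.
by rewrite APh Ah0 scaler0 add0r.
Qed.

Lemma ran_adjoint_coercive : exists2 M, 0 < M & forall z, C z -> `|z| <= M * `|As z|.
Proof.
apply: (friedrichs hY hX C_subspace) => [|z].
  by move=> a y1 y2 [Dy1 _] [Dy2 _]; exact: (graph_adjoint_linear hX hY hadj).
have [[x Dx Pz] orth] := hP z; exists x => y [Dy ry].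
by rewrite (orth_proj_ip hY z hP ry) -Pz (graph_adjointE hadj) // (ipC hX).
Qed.

Lemma reduced_op_onto y : ran D A y -> exists2 phi, (D `&` ran Ds As) phi & A phi = y.
Proof.
move=> ry; have [M M0 hM] := ran_adjoint_coercive.
have hcoer z : C z -> `|z| ^+ 2 <= M ^+ 2 * (0 * `|z| ^+ 2 + `|As z| ^+ 2).
  move=> Cz; rewrite mul0r add0r -exprMn.
  by rewrite ler_pXn2r ?nnegrE ?mulr_ge0 ?hM // ltW.
have [chi [Dchi rchi] hv] := exists_variational_solution hY hX y 0 C_subspace
  (fun a y1 y2 Cy1 Cy2 => graph_adjoint_linear hX hY hadj a Cy1.1 Cy2.1)
  C_graph_closed (lexx 0) (exprn_gt0 2 M0) hcoer.
have [DAs AAs] : D (As chi) /\ A (As chi) = y.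
  apply/hbiadj => h Dh; have [CPh APh] := orth_proj_ran_adjoint Dh.
  rewrite (orth_proj_ip hY h hP ry) (ipC hX) -APh.
  by have := hv _ CPh; rewrite mul0r add0r (ip0r hX) addr0.
by exists (As chi) => //; split => //; exists chi.
Qed.

Lemma reduced_op_quadratic_max x xt c :
  Ds x -> ran D A c -> orth_compl ipY (ran D A) (x - xt - c) ->
  (forall phi, D phi -> 2 * ipX (As x) phi - ipY (2 *: xt + A phi) (A phi) <= `|c| ^+ 2) /\
  exists phih, (D `&` ran Ds As) phih /\ A phih = c /\
    2 * ipX (As x) phih - ipY (2 *: xt + A phih) (A phih) = `|c| ^+ 2.
Proof.
move=> Dx rc oc; apply: sqr_norm_defect_max; last 2 first.
- by move=> ? [].
- exact: reduced_op_onto.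
move=> phi Dphi; rewrite (ipC hX) -(graph_adjointE hadj) //.
by apply: (sqr_norm_defectE hY); apply: oc; exists phi.
Qed.

End ReducedOperator.

Section HilbertComplex.
Variables (R : realType) (H1 H2 H3 : normedModType R).
Variables (ip1 : H1 -> H1 -> R) (ip2 : H2 -> H2 -> R) (ip3 : H3 -> H3 -> R).
Hypotheses (hip1 : is_inner_product ip1) (hip2 : is_inner_product ip2)
  (hip3 : is_inner_product ip3).
Variables (D1 : set H1) (A1 : H1 -> H2) (Ds1 : set H2) (As1 : H2 -> H1).
Variables (D2 : set H2) (A2 : H2 -> H3) (Ds2 : set H3) (As2 : H3 -> H2).
Hypotheses (hadj1 : graph_adjoint ip1 ip2 D1 A1 Ds1 As1)
  (hbiadj2 : graph_adjoint ip3 ip2 Ds2 As2 D2 A2) (hc1 : complex_prop D1 A1 D2 A2).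

Let K2 := ker D2 A2 `&` ker Ds1 As1.

Lemma harmonic_orth_ran : K2 `<=` orth_compl ip2 (ran D1 A1).
Proof.
move=> z [_ [Dz Az]] _ [phi Dphi <-].
by rewrite (ipC hip2) (graph_adjointE hadj1) // Az (ip0r hip1).
Qed.

Lemma ker_orth_ran_adjoint : ker D2 A2 `<=` orth_compl ip2 (ran Ds2 As2).
Proof.
move=> a [Da Aa] _ [w Dw <-].
by rewrite (ipC hip2) (proj1 (hbiadj2 a (A2 a)) (conj Da erefl)) // Aa (ip0r hip3).
Qed.

Lemma ran_adjoint_orth_ran : ran Ds2 As2 `<=` orth_compl ip2 (ran D1 A1).
Proof.
move=> b rb a ra; rewrite (ipC hip2); exact: ker_orth_ran_adjoint (hc1 ra) _ rb.
Qed.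

Lemma ran_adjoint_orth_harmonic : ran Ds2 As2 `<=` orth_compl ip2 K2.
Proof.
move=> b rb z Kz; rewrite (ipC hip2); exact: ker_orth_ran_adjoint Kz.1 _ rb.
Qed.

Lemma orth_ranges_eq0 :
  orth_compl ip2 (ran D1 A1) `&` orth_compl ip2 K2 `&` orth_compl ip2 (ran Ds2 As2)
  `<=` [set 0].
Proof.
move=> r [] [] o1 oK o2.
have [Dsr Asr] : Ds1 r /\ As1 r = 0.
  by apply: (graph_adjoint_ker hip1 hadj1) => phi Dphi; rewrite (ipC hip2) o1 //; exists phi.
have [Dr Ar] : D2 r /\ A2 r = 0.
  by apply/hbiadj2 => h Dh; rewrite (ip0r hip3) (ipC hip2) o2 //; exists h.
by apply: (ipxx_eq0 hip2); apply: oK.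
Qed.

Variables (pi2 piA1 piAs2 : H2 -> H2).
Hypotheses (hpi2 : is_orth_proj ip2 K2 pi2) (hpiA1 : is_orth_proj ip2 (ran D1 A1) piA1)
  (hpiAs2 : is_orth_proj ip2 (ran Ds2 As2) piAs2).

Lemma hodge_decomposition e :
  [/\ e = piA1 e + pi2 e + piAs2 e,
      ran D1 A1 (piA1 e) /\ K2 (pi2 e) /\ ran Ds2 As2 (piAs2 e),
      ip2 (piA1 e) (pi2 e) = 0 /\ ip2 (piA1 e) (piAs2 e) = 0 /\ ip2 (pi2 e) (piAs2 e) = 0
    & `|e| ^+ 2 = `|piA1 e| ^+ 2 + `|pi2 e| ^+ 2 + `|piAs2 e| ^+ 2].
Proof.
have [rA1 _] := hpiA1 e; have [rK2 _] := hpi2 e; have [rAs2 _] := hpiAs2 e.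
have o1 : ip2 (piA1 e) (pi2 e) = 0 by rewrite (ipC hip2); exact: harmonic_orth_ran.
have o2 : ip2 (piA1 e) (piAs2 e) = 0 by rewrite (ipC hip2); exact: ran_adjoint_orth_ran.
have o3 : ip2 (pi2 e) (piAs2 e) = 0.
  by rewrite (ipC hip2); exact: ran_adjoint_orth_harmonic.
have eE := orth_proj_sum3 hip2 e hpiA1 hpi2 hpiAs2 harmonic_orth_ran
  ran_adjoint_orth_ran ran_adjoint_orth_harmonic orth_ranges_eq0.
by split => //; rewrite {1}eE (sqr_norm_sum3 hip2).
Qed.

End HilbertComplex.

Unset Implicit Arguments.

Theorem theorem4p5 (R : realType)
  (H0 H1 H2 H3 H4 : completeNormedModType R)
  (ip0 : H0 -> H0 -> R) (ip1 : H1 -> H1 -> R) (ip2 : H2 -> H2 -> R)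
  (ip3 : H3 -> H3 -> R) (ip4 : H4 -> H4 -> R)
  (hip0 : is_inner_product ip0) (hip1 : is_inner_product ip1)
  (hip2 : is_inner_product ip2) (hip3 : is_inner_product ip3)
  (hip4 : is_inner_product ip4)
  (D0 : set H0) (A0 : H0 -> H1) (D1 : set H1) (A1 : H1 -> H2)
  (D2 : set H2) (A2 : H2 -> H3) (D3 : set H3) (A3 : H3 -> H4)
  (hA0 : dd_closed_op D0 A0) (hA1 : dd_closed_op D1 A1)
  (hA2 : dd_closed_op D2 A2) (hA3 : dd_closed_op D3 A3)
  (Ds1 : set H2) (As1 : H2 -> H1) (hAs1 : is_adjoint ip1 ip2 D1 A1 Ds1 As1)
  (Ds2 : set H3) (As2 : H3 -> H2) (hAs2 : is_adjoint ip2 ip3 D2 A2 Ds2 As2)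
  (hc0 : complex_prop D0 A0 D1 A1) (hc1 : complex_prop D1 A1 D2 A2)
  (hc2 : complex_prop D2 A2 D3 A3)
  (hR1 : closed (ran D1 A1)) (hR2 : closed (ran D2 A2))
  (hK2 : finite_dim (ker D2 A2 `&` ker Ds1 As1))
  (pi2 piA1 piAs2 : H2 -> H2)
  (hpi2 : is_orth_proj ip2 (ker D2 A2 `&` ker Ds1 As1) pi2)
  (hpiA1 : is_orth_proj ip2 (ran D1 A1) piA1)
  (hpiAs2 : is_orth_proj ip2 (ran Ds2 As2) piAs2)
  (f : H3) (g : H1) (k : H2)
  (hf : ran D2 A2 f) (hg : ran Ds1 As1 g) (hk : (ker D2 A2 `&` ker Ds1 As1) k)
  (x : H2) (hxD2 : D2 x) (hxDs1 : Ds1 x)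
  (hA2x : A2 x = f) (hAs1x : As1 x = g) (hpi2x : pi2 x = k)
  (xt : H2) :
  let e := x - xt in
  let eA1 := piA1 e in
  let eK2 := pi2 e in
  let eAs2 := piAs2 e in
  (* (i) *)
  [/\ e = eA1 + eK2 + eAs2,
      ran D1 A1 eA1 /\ (ker D2 A2 `&` ker Ds1 As1) eK2 /\ ran Ds2 As2 eAs2,
      ip2 eA1 eK2 = 0 /\ ip2 eA1 eAs2 = 0 /\ ip2 eK2 eAs2 = 0
    & `|e| ^+ 2 = `|eA1| ^+ 2 + `|eK2| ^+ 2 + `|eAs2| ^+ 2] /\
  (* (ii) *)
  ((forall phi, D1 phi ->
      2 * ip1 g phi - ip2 (2 *: xt + A1 phi) (A1 phi) <= `|eA1| ^+ 2) /\
   exists phih, (D1 `&` ran Ds1 As1) phih /\ A1 phih = eA1 /\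
      2 * ip1 g phih - ip2 (2 *: xt + A1 phih) (A1 phih) = `|eA1| ^+ 2) /\
  (* (iii) *)
  ((forall phi, Ds2 phi ->
      2 * ip3 f phi - ip2 (2 *: xt + As2 phi) (As2 phi) <= `|eAs2| ^+ 2) /\
   exists phih, (Ds2 `&` ran D2 A2) phih /\ As2 phih = eAs2 /\
      2 * ip3 f phih - ip2 (2 *: xt + As2 phih) (As2 phih) = `|eAs2| ^+ 2) /\
  (* (iv) *)
  ((forall theta, (ker D2 A2 `&` ker Ds1 As1) theta ->
      ip2 (2 *: (k - xt) - theta) theta <= `|eK2| ^+ 2) /\
   ip2 (2 *: (k - xt) - eK2) eK2 = `|eK2| ^+ 2) /\
  (* final remark *)
  (forall xtp, orth_compl ip2 (ker D2 A2 `&` ker Ds1 As1) xtp -> xt = k + xtp ->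
    eK2 = 0 /\
    ((forall phi, D1 phi ->
        2 * ip1 g phi - ip2 (2 *: xtp + A1 phi) (A1 phi) <= `|eA1| ^+ 2) /\
     exists phih, (D1 `&` ran Ds1 As1) phih /\ A1 phih = eA1 /\
        2 * ip1 g phih - ip2 (2 *: xtp + A1 phih) (A1 phih) = `|eA1| ^+ 2) /\
    ((forall phi, Ds2 phi ->
        2 * ip3 f phi - ip2 (2 *: xtp + As2 phi) (As2 phi) <= `|eAs2| ^+ 2) /\
     exists phih, (Ds2 `&` ran D2 A2) phih /\ As2 phih = eAs2 /\
        2 * ip3 f phih - ip2 (2 *: xtp + As2 phih) (As2 phih) = `|eAs2| ^+ 2)).
Proof.
(* The closed ranges enter only through the projectors piA1 and piAs2. *)
move=> e eA1 eK2 eAs2; subst f g k.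
have hadj1 := is_adjoint_graph hip1 hA1 hAs1.
have hbiadj1 := dd_closed_op_biadjoint hip1 hip2 hA1 hAs1.
have hadj2 := is_adjoint_graph hip2 hA2 hAs2.
have hbiadj2 := dd_closed_op_biadjoint hip2 hip3 hA2 hAs2.
have hodge := hodge_decomposition hip1 hip2 hip3 hadj1 hbiadj2 hc1 hpi2 hpiA1 hpiAs2 e.
have [rA1 oA1] := hpiA1 e; have [rAs2 oAs2] := hpiAs2 e.
have ii := reduced_op_quadratic_max hip1 hip2 hadj1 hbiadj1 hpiA1 hxDs1 rA1.
have iii := reduced_op_quadratic_max hip3 hip2 hbiadj2 hadj2 hpiAs2 hxD2 rAs2.
split; [exact: hodge | split; [exact: ii | split; [exact: iii | split]]].
  exact (orth_proj_quadratic_max hip2 x xt hpi2).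
move=> xtp oxtp hxt.
have ex : orth_compl ip2 (ker D2 A2 `&` ker Ds1 As1) e.
  by rewrite /e hxt opprD addrA; apply: (orth_complD hip2) => [|z Kz];
    [exact: (hpi2 x).2 | rewrite (ipNl hip2) oxtp ?oppr0].
split; first exact: (orth_proj_orth_eq0 hip2 hpi2 ex).
have shift (S : set H2) c : orth_compl ip2 S (pi2 x) ->
    orth_compl ip2 S (x - xt - c) -> orth_compl ip2 S (x - xtp - c).
  move=> ok oc; have <- : x - xt - c + pi2 x = x - xtp - c.
    by rewrite hxt opprD !addrA addrAC (addrAC (x - xtp - pi2 x) (- c)) subrK.
  exact (orth_complD hip2 oc ok).
split; first exact: ii (shift _ _ (harmonic_orth_ran hip1 hip2 hadj1 hk) oA1).
exact: iii (shift _ _ (ker_orth_ran_adjoint hip2 hip3 hbiadj2 hk.1) oAs2).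
Qed.
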